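(* An element $\omega\in B_k$ is a zero divisor if and only if there exist $w_1,\dots,w_k$ with $w_i\in\{v_i,1-v_i\}$ for $1\le i\le k$ such that $\omega$ belongs to the ideal $\langle w_1,w_2,\dots,w_k\rangle$ of $B_k$.
   Context: Let $p$ be a prime, $r\ge 1$ an integer, and $\mathbb{F}_{p^r}$ the finite field with $p^r$ elements. For an integer $k\ge 1$, $B_k$ denotes the commutative ring $B_k=\mathbb{F}_{p^r}[v_1,\dots,v_k]/\langle v_i^2-v_i,\ v_iv_j-v_jv_i : 1\le i,j\le k\rangle$. An element $\omega$ is a zero divisor if $\omega b=0$ for some nonzero $b\in B_k$. *)

From HB Require Import structures.
From mathcomp Require Import all_boot all_algebra all_field.
From mathcomp Require Import mpoly.
Set Implicit Arguments. Unset Strict Implicit. Unset Printing Implicit Defensive.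
Import GRing.Theory.
Local Open Scope ring_scope.

(* B_k = F[v_1,...,v_k] / < v_i^2 - v_i, v_i v_j - v_j v_i >.
   We work in the commutative polynomial ring {mpoly F[k]} (so the
   commutator relations v_i v_j - v_j v_i are already 0), with the variable
   v_i rendered as 'X_i for i : 'I_k, and represent elements of B_k by
   polynomial representatives. *)

Definition in_ideal (R : comNzRingType) (gens : seq R) (x : R) : Prop :=
  exists cs : seq R, x = \sum_(i < size gens) cs`_i * gens`_i.

Definition Bk_rels (F : fieldType) (k : nat) : seq {mpoly F[k]} :=
  [seq 'X_i ^+ 2 - 'X_i | i <- enum 'I_k].

Definition Bk_eq (F : fieldType) (k : nat) (a b : {mpoly F[k]}) : Prop :=
  in_ideal (Bk_rels F k) (a - b).

Definition Bk_zero_divisor (F : fieldType) (k : nat) (omega : {mpoly F[k]}) : Prop :=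
  exists b : {mpoly F[k]}, ~ Bk_eq b 0 /\ Bk_eq (omega * b) 0.

Definition w_choice (F : fieldType) (k : nat) (s : 'I_k -> bool) (i : 'I_k)
  : {mpoly F[k]} := if s i then 'X_i else 1 - 'X_i.

(* the class of omega lies in the ideal <w_1,...,w_k> of B_k; its preimage in
   the polynomial ring is generated by the w_i together with the relations *)
Definition Bk_in_ideal_w (F : fieldType) (k : nat) (s : 'I_k -> bool)
  (omega : {mpoly F[k]}) : Prop :=
  in_ideal (Bk_rels F k ++ [seq w_choice F s i | i <- enum 'I_k]) omega.

(* Evaluation at the 2^k Boolean points identifies B_k with F^(2^k): a polynomial lies in
   the ideal of the relations X_i^2 - X_i iff it vanishes at every Boolean point, the
   products e_a = \prod_i w_i (with w_i = X_i or 1 - X_i according to a_i) are orthogonal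
   idempotents with e_a(a) = 1 summing to 1, and p e_a = p(a) e_a in B_k. Hence the class of
   omega is a zero divisor iff omega vanishes at some Boolean point a, i.e. iff omega lies in
   the ideal <X_i - a_i> = <w_1, ..., w_k> for the complementary choice of the w_i. *)
From HB Require Import structures.
From mathcomp Require Import all_boot all_algebra all_field.
From mathcomp Require Import mpoly.
Set Implicit Arguments. Unset Strict Implicit. Unset Printing Implicit Defensive.
Local Open Scope ring_scope.
Import GRing.Theory.

Section InIdeal.
Variable R : comNzRingType.
Implicit Types (G H : seq R) (x y : R).

Lemma in_idealP G x :
  in_ideal G x <-> exists c : 'I_(size G) -> R, x = \sum_i c i * G`_i.
Proof.
split=> [[cs ->]|[c ->]]; first by exists (fun i => cs`_i).
exists [seq c i | i <- enum 'I_(size G)]; apply: eq_bigr => i _.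
by rewrite (nth_map i) ?size_enum_ord // nth_ord_enum.
Qed.

Lemma in_ideal0 G : in_ideal G 0.
Proof. by apply/in_idealP; exists (fun=> 0); rewrite big1 // => i _; rewrite mul0r. Qed.

Lemma in_idealD G x y : in_ideal G x -> in_ideal G y -> in_ideal G (x + y).
Proof.
move=> /in_idealP[c ->] /in_idealP[d ->]; apply/in_idealP; exists (fun i => c i + d i).
by rewrite -big_split; apply: eq_bigr => i _; rewrite mulrDl.
Qed.

Lemma in_idealMl G x y : in_ideal G x -> in_ideal G (y * x).
Proof.
move=> /in_idealP[c ->]; apply/in_idealP; exists (fun i => y * c i).
by rewrite mulr_sumr; apply: eq_bigr => i _; rewrite mulrA.
Qed.

Lemma in_idealMr G x y : in_ideal G x -> in_ideal G (x * y).
Proof. by rewrite mulrC; apply: in_idealMl. Qed.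

Lemma in_idealN G x : in_ideal G x -> in_ideal G (- x).
Proof. by rewrite -mulN1r; apply: in_idealMl. Qed.

Lemma in_ideal_sum G (I : finType) (f : I -> R) :
  (forall i, in_ideal G (f i)) -> in_ideal G (\sum_i f i).
Proof. by move=> Gf; apply: big_ind => //; [apply: in_ideal0 | apply: in_idealD]. Qed.

Lemma in_ideal_mem G g : g \in G -> in_ideal G g.
Proof.
move=> gG; apply/in_idealP; pose i0 := Ordinal (etrans (index_mem g G) gG).
exists (fun j => (j == i0)%:R); rewrite (bigD1 i0) //= eqxx mul1r nth_index //.
by rewrite big1 ?addr0 // => j /negPf ->; rewrite mul0r.
Qed.

Lemma in_ideal_mulr G H x y : in_ideal G x ->
  (forall g, g \in G -> in_ideal H (g * y)) -> in_ideal H (x * y).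
Proof.
move=> /in_idealP[c ->] GyH; rewrite mulr_suml; apply: in_ideal_sum => i.
by rewrite -mulrA; apply/in_idealMl/GyH; apply: mem_nth.
Qed.

Lemma in_ideal_subset G H x : in_ideal G x ->
  (forall g, g \in G -> in_ideal H g) -> in_ideal H x.
Proof.
by move=> Gx GH; rewrite -[x]mulr1; apply: (in_ideal_mulr Gx) => g /GH; rewrite mulr1.
Qed.

Lemma in_ideal_rmorph_eq0 (S : comNzRingType) (f : {rmorphism R -> S}) G x :
  in_ideal G x -> (forall g, g \in G -> f g = 0) -> f x = 0.
Proof.
move=> /in_idealP[c ->] fG; rewrite rmorph_sum big1 // => i _.
by rewrite rmorphM (fG G`_i) ?mulr0 // mem_nth.
Qed.

End InIdeal.

Section MevalIdeal.
Variables (R : comNzRingType) (n : nat) (v : 'I_n -> R).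

Definition point_ideal_gens : seq {mpoly R[n]} := [seq 'X_i - (v i)%:MP | i <- enum 'I_n].

Lemma sub_meval_in_point_ideal (p : {mpoly R[n]}) :
  in_ideal point_ideal_gens (p - (p.@[v])%:MP).
Proof.
pose P (q : {mpoly R[n]}) := in_ideal point_ideal_gens (q - (q.@[v])%:MP).
have PC c : P c%:MP by rewrite /P mevalC subrr; apply: in_ideal0.
have PX i : P 'X_i by rewrite /P mevalXU; apply/in_ideal_mem/map_f; rewrite mem_enum.
have PD q1 q2 : P q1 -> P q2 -> P (q1 + q2).
  by move=> P1 P2; rewrite /P mevalD mpolyCD opprD addrACA; apply: in_idealD.
have PM q1 q2 : P q1 -> P q2 -> P (q1 * q2).
  move=> P1 P2; rewrite /P mevalM mpolyCM.
  have -> : q1 * q2 - (q1.@[v])%:MP * (q2.@[v])%:MP =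
      (q1 - (q1.@[v])%:MP) * q2 + (q1.@[v])%:MP * (q2 - (q2.@[v])%:MP).
    by rewrite mulrBl mulrBr addrA subrK.
  by apply: in_idealD; [apply: in_idealMr | apply: in_idealMl].
have P0 : P 0 by rewrite -mpolyC0.
have P1 : P 1 by rewrite -mpolyC1.
rewrite -/(P p) [p]mpolyE; apply: big_ind => // m _.
rewrite -mul_mpolyC mpolyXE_id; apply: (PM) => //; apply: big_ind => // i _.
by elim: (m i) => [|e IHe]; rewrite ?expr0 // exprS; apply: (PM).
Qed.

End MevalIdeal.

Section BooleanPoints.
Variables (F : fieldType) (k : nat).
Local Notation I := (in_ideal (Bk_rels F k)).

Definition bool_point (a : 'I_k -> bool) : 'I_k -> F := fun i => (a i)%:R.

Definition bool_idem (a : 'I_k -> bool) : {mpoly F[k]} := \prod_i w_choice F a i.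

Lemma meval_w_choice (s a : 'I_k -> bool) i :
  (w_choice F s i).@[bool_point a] = if s i then (a i)%:R else 1 - (a i)%:R.
Proof. by rewrite /w_choice; case: (s i); rewrite ?mevalB ?meval1 mevalXU. Qed.

Lemma X_sub_bool_point (s a : 'I_k -> bool) i : s i != a i ->
  'X_i - (bool_point a i)%:MP = (-1) ^+ a i * w_choice F s i.
Proof.
rewrite /w_choice /bool_point; case: (s i); case: (a i) => //= _.
  by rewrite expr0 mul1r mpolyC0 subr0.
by rewrite expr1 mpolyC1 mulN1r opprB.
Qed.

Lemma meval_Bk_rels a g : g \in Bk_rels F k -> g.@[bool_point a] = 0.
Proof.
move=> /mapP[i _ ->]; rewrite mevalB rmorphXn /= mevalXU /bool_point.
by case: (a i); rewrite /= ?mulr1n ?mulr0n ?expr1n ?expr0n subrr.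
Qed.

Lemma Bk_rels_meval_eq0 a x : I x -> x.@[bool_point a] = 0.
Proof. by move=> Ix; apply: (in_ideal_rmorph_eq0 (f := meval _) Ix); apply: meval_Bk_rels. Qed.

Lemma bool_idem_meval_self a : (bool_idem a).@[bool_point a] = 1.
Proof.
rewrite rmorph_prod big1 // => i _ /=; rewrite meval_w_choice.
by case: (a i); rewrite ?subr0.
Qed.

Lemma sum_bool_idem : \sum_(a : {ffun 'I_k -> bool}) bool_idem a = 1.
Proof.
rewrite /bool_idem -(bigA_distr_bigA (fun i b => w_choice F (fun=> b) i)) /=.
by rewrite big1 // => i _; rewrite big_bool /w_choice /= addrC subrK.
Qed.

Lemma w_choice_mul_bool_idem (s a : 'I_k -> bool) i :
  s i != a i -> I (w_choice F s i * bool_idem a).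
Proof.
move=> sa; rewrite /bool_idem (bigD1 i) //= mulrA; apply: in_idealMr.
have XX : I ('X_i * (1 - 'X_i)).
  rewrite mulrBr mulr1 -expr2 -opprB; apply/in_idealN/in_ideal_mem/map_f.
  by rewrite mem_enum.
by rewrite /w_choice; move: sa; case: (s i); case: (a i) => //= _; rewrite mulrC.
Qed.

Lemma mul_bool_idem_meval a p : I ((p - (p.@[bool_point a])%:MP) * bool_idem a).
Proof.
apply: (in_ideal_mulr (sub_meval_in_point_ideal _ p)) => _ /mapP[i _ ->].
have nai : ~~ a i != a i by case: (a i).
by rewrite (X_sub_bool_point (s := fun j => ~~ a j) nai) -mulrA;
  apply/in_idealMl/w_choice_mul_bool_idem.
Qed.

Lemma bool_points_eq0_in_ideal p :
  (forall a : {ffun 'I_k -> bool}, p.@[bool_point a] = 0) -> I p.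
Proof.
move=> p0; rewrite -[p]mulr1 -sum_bool_idem mulr_sumr; apply: in_ideal_sum => a.
by have := mul_bool_idem_meval a p; rewrite p0 mpolyC0 subr0.
Qed.

Lemma Bk_zero_divisorP omega :
  Bk_zero_divisor omega <-> exists a : 'I_k -> bool, omega.@[bool_point a] = 0.
Proof.
rewrite /Bk_zero_divisor /Bk_eq; split=> [[b []]|[a omega_a]].
  rewrite !subr0 => b_nz omega_b.
  have [/existsP[a ba] | /existsPn b0] := boolP [exists a : {ffun 'I_k -> bool},
      b.@[bool_point a] != 0]; last first.
    by case: b_nz; apply: bool_points_eq0_in_ideal => a; apply/eqP/negPn/b0.
  exists a; apply/eqP; move/eqP: (Bk_rels_meval_eq0 a omega_b).
  by rewrite mevalM mulf_eq0 (negPf ba) orbF.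
exists (bool_idem a); rewrite !subr0; split.
  by move=> /(Bk_rels_meval_eq0 a); rewrite bool_idem_meval_self; apply/eqP/oner_neq0.
by have := mul_bool_idem_meval a omega; rewrite omega_a mpolyC0 subr0.
Qed.

Lemma Bk_in_ideal_wP (s : 'I_k -> bool) omega :
  Bk_in_ideal_w s omega <-> omega.@[bool_point (fun i => ~~ s i)] = 0.
Proof.
split=> [omega_w | omega_a].
  apply: (in_ideal_rmorph_eq0 (f := meval _) omega_w) => g /=; rewrite mem_cat.
  case/orP=> [/meval_Bk_rels-> // | /mapP[i _ ->]].
  by rewrite meval_w_choice; case: (s i); rewrite /= ?mulr0n ?mulr1n ?subrr.
have := sub_meval_in_point_ideal (bool_point (fun i => ~~ s i)) omega.
rewrite omega_a mpolyC0 subr0 => /in_ideal_subset; apply=> _ /mapP[i _ ->].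
have sni : s i != ~~ s i by case: (s i).
rewrite (X_sub_bool_point (a := fun j => ~~ s j) sni); apply/in_idealMl/in_ideal_mem.
by rewrite mem_cat map_f ?orbT ?mem_enum.
Qed.

End BooleanPoints.

Theorem lemma2p3 (F : finFieldType) (p r k : nat)
  (hp : prime p) (hr : (0 < r)%N) (hF : #|F| = (p ^ r)%N) (hk : (1 <= k)%N)
  (omega : {mpoly F[k]}) :
  Bk_zero_divisor omega <->
  exists s : 'I_k -> bool, Bk_in_ideal_w s omega.
Proof.
rewrite Bk_zero_divisorP; split=> [[a omega_a] | [s /Bk_in_ideal_wP omega_s]].
  exists (fun i => ~~ a i); apply/Bk_in_ideal_wP.
  by rewrite -omega_a; apply: meval_eq => i; rewrite /bool_point negbK.
by exists (fun i => ~~ s i).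
Qed.
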